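(* Let $p$ be a prime, $m\mid n$, $s=p^m-1$, $t=(p^n-1)/(p^m-1)$, and assume $\gcd(s,t)=1$. Let $\alpha$ be a generator of $\mathbb{F}_{p^n}^\times$, $\beta=\alpha^t\in\mathbb{F}_{p^m}^\times$, $\gamma=\alpha^s$, and let $B_{i,j}=\mathrm{tr}_{\mathbb{F}_{p^n}/\mathbb{F}_p}(\beta^i\gamma^j)$ for $(i,j)\in\mathbb{Z}_s\times\mathbb{Z}_t$. For each $j$, consider the column $(B_{i,j})_{0\le i<s}$. Then: (1) if $\mathrm{tr}_{\mathbb{F}_{p^n}/\mathbb{F}_{p^m}}(\gamma^j)=0$, the column is identically zero; (2) if $\mathrm{tr}_{\mathbb{F}_{p^n}/\mathbb{F}_{p^m}}(\gamma^j)=\beta^r\in\mathbb{F}_{p^m}^\times$, then the column equals $\mathsf{DB}_\beta^{[r]}$, i.e. $B_{i,j}=\mathrm{tr}_{\mathbb{F}_{p^m}/\mathbb{F}_p}(\beta^{r+i})$ for all $0\le i<s$.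
   Context: $\mathrm{tr}_{K/F}$ denotes the field trace. $\mathsf{DB}_\beta=(\mathrm{tr}_{\mathbb{F}_{p^m}/\mathbb{F}_p}(\beta^i))_{0\le i<s}$ and for an integer $r$, $\mathsf{DB}_\beta^{[r]}$ is its cyclic shift $(\mathrm{tr}_{\mathbb{F}_{p^m}/\mathbb{F}_p}(\beta^{r+i}))_{0\le i<s}$, indices mod $s$. *)

From mathcomp Require Import all_boot all_order all_algebra all_field.
Set Implicit Arguments. Unset Strict Implicit. Unset Printing Implicit Defensive.
Import GRing.Theory.
Local Open Scope ring_scope.

(* Field traces in a finite field L of characteristic p, written as sums of
   Frobenius powers (the standard formula for traces of finite fields).
   [ftrace p e d x] = \sum_(k < d) x^(p^(e*k)) is the trace from F_{p^(e*d)}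
   down to F_{p^e}, applied to an element x of F_{p^(e*d)} (seen inside L). *)
Definition ftrace (L : finFieldType) (p e d : nat) (x : L) : L :=
  \sum_(k < d) x ^+ (p ^ (e * k)).

(* The trace from F_{p^n} to F_p factors through F_{p^m}, and the inner trace
   is F_{p^m}-linear.  Since beta = alpha^t satisfies
   beta^(p^m - 1) = alpha^(p^n - 1) = 1, beta lies in F_{p^m}, so
     B_{i,j} = tr_{m/p}(tr_{n/m}(beta^i gamma^j)) = tr_{m/p}(beta^i tr_{n/m}(gamma^j)),
   and both claims follow by substituting the value of tr_{n/m}(gamma^j). *)
From mathcomp Require Import all_boot all_order all_algebra all_field.
Set Implicit Arguments. Unset Strict Implicit. Unset Printing Implicit Defensive.
Import GRing.Theory.
Local Open Scope ring_scope.

Lemma sum_ord_mul (V : nmodType) (a d : nat) (F : nat -> V) :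
  \sum_(k < a * d) F k = \sum_(i < a) \sum_(j < d) F (a * j + i)%N.
Proof.
rewrite exchange_big /= -(big_mkord xpredT) mulnC big_nat_mul big_mkord.
apply: eq_bigr => j _; rewrite mulSn addnC -{1}(add0n (j * a)%N) big_addn addKn.
by rewrite big_mkord; apply: eq_bigr => i _; rewrite addnC mulnC.
Qed.

Lemma expr_fixed_pow (R : pzSemiRingType) (x : R) (q k : nat) :
  x ^+ q = x -> x ^+ (q ^ k) = x.
Proof.
move=> xq; elim: k => [|k IHk]; first by rewrite expn0 expr1.
by rewrite expnSr exprM IHk xq.
Qed.

Section FrobeniusPowers.

Variables (R : comNzSemiRingType) (p : nat).
Hypothesis pcharRp : p \in [pchar R].

Lemma expr_sum_pchar I (r : seq I) (P : pred I) (F : I -> R) (k : nat) :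
  (\sum_(i <- r | P i) F i) ^+ (p ^ k) = \sum_(i <- r | P i) F i ^+ (p ^ k).
Proof.
have p_pr := pcharf_prime pcharRp.
apply: (big_morph (fun x : R => x ^+ (p ^ k))) => [x y|].
  by rewrite exprDn_pchar // pnatX (pnatE _ p_pr) pcharRp.
by rewrite expr0n expn_eq0 eqn0Ngt prime_gt0.
Qed.

End FrobeniusPowers.

Section Trace.

Variables (L : finFieldType) (p : nat).

Lemma ftraceZ (e d : nat) (c x : L) : c ^+ (p ^ e) = c ->
  ftrace p e d (c * x) = c * ftrace p e d x.
Proof.
move=> c_fixed; rewrite /ftrace mulr_sumr; apply: eq_bigr => k _.
by rewrite exprMn expnM expr_fixed_pow.
Qed.

Hypothesis pcharLp : p \in [pchar L].

Lemma ftrace0 (e d : nat) : ftrace p e d (0 : L) = 0.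
Proof.
rewrite /ftrace big1 // => k _.
by rewrite expr0n expn_eq0 eqn0Ngt prime_gt0 // (pcharf_prime pcharLp).
Qed.

Lemma ftrace_tower (e a d : nat) (x : L) :
  ftrace p e (a * d) x = ftrace p e a (ftrace p (e * a) d x).
Proof.
rewrite /ftrace (sum_ord_mul a d (fun k => x ^+ (p ^ (e * k)))).
apply: eq_bigr => i _.
rewrite expr_sum_pchar //; apply: eq_bigr => j _.
by rewrite -exprM -expnD mulnDr mulnA.
Qed.

End Trace.

Theorem mainTheorem5 (L : finFieldType) (p m n : nat)
  (hp : prime p) (hchar : p \in [pchar L]) (hcard : #|L| = (p ^ n)%N)
  (hmn : (m %| n)%N)
  (hgcd : coprime (p ^ m).-1 ((p ^ n).-1 %/ (p ^ m).-1))
  (alpha : L) (halpha : ((p ^ n).-1).-primitive_root alpha) :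
  let s := (p ^ m).-1 in
  let t := ((p ^ n).-1 %/ (p ^ m).-1)%N in
  let beta := alpha ^+ t in
  let gamma := alpha ^+ s in
  let tr_n_p := ftrace p 1 n in          (* tr_{F_{p^n}/F_p} *)
  let tr_n_m := ftrace p m (n %/ m) in   (* tr_{F_{p^n}/F_{p^m}} *)
  let tr_m_p := ftrace p 1 m in          (* tr_{F_{p^m}/F_p} *)
  let B := fun i j : nat => tr_n_p (beta ^+ i * gamma ^+ j) in
  forall j : nat, (j < t)%N ->
    (tr_n_m (gamma ^+ j) = 0 -> forall i : nat, (i < s)%N -> B i j = 0) /\
    (forall r : nat, tr_n_m (gamma ^+ j) = beta ^+ r ->
       forall i : nat, (i < s)%N -> B i j = tr_m_p (beta ^+ (r + i))).
Proof.
move=> s t beta gamma tr_n_p tr_n_m tr_m_p B j _.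
have [m0 | m_gt0] := posnP m.
  by split=> [_|r _] i; rewrite /s m0 expn0.
have beta_fixed : beta ^+ (p ^ m) = beta.
  have pm_gt0 : (0 < p ^ m)%N by rewrite expn_gt0 prime_gt0.
  have s_dvd : (s %| (p ^ n).-1)%N.
    by case/dvdnP: hmn => d ->; rewrite mulnC expnM dvdn_pred_predX.
  have st : (t * s)%N = (p ^ n).-1 by rewrite divnK.
  by rewrite -(prednK pm_gt0) exprS -exprM st prim_expr_order // mulr1.
have B_tower i : B i j = tr_m_p (beta ^+ i * tr_n_m (gamma ^+ j)).
  rewrite /B /tr_n_p /tr_m_p /tr_n_m -{1}(divnK hmn) mulnC ftrace_tower //.
  by rewrite mul1n ftraceZ // -exprM mulnC exprM beta_fixed.
split=> [tr0 | r trr] i _; rewrite B_tower.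
  by rewrite tr0 mulr0 /tr_m_p ftrace0.
by rewrite trr -exprD addnC.
Qed.
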